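(* Let $\mathbf G$ be a group such that $\mathcal G^\pm(\mathbf G)\cong\mathcal G^\pm(\mathbb Q)$, where $\mathbb Q$ denotes the additive group $(\mathbb Q,+)$. Then $\mathbf G\cong(\mathbb Q,+)$.
   Context: For a group $\mathbf G$, the $Z^\pm$-power graph $\mathcal G^\pm(\mathbf G)$ is the simple graph with vertex set $G$ in which distinct $x,y$ are adjacent iff $y=x^n$ or $x=y^n$ for some $n\in\mathbb Z\setminus\{0\}$ (in additive notation: $y=nx$ or $x=ny$). *)

(* An arbitrary (possibly infinite) group is given by an
   explicit carrier type with multiplication, identity and inverse. *)
From HB Require Import structures.
From mathcomp Require Import all_boot all_order all_algebra.
Set Implicit Arguments. Unset Strict Implicit. Unset Printing Implicit Defensive.
Import Order.TTheory GRing.Theory Num.Theory.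

Definition is_group (T : Type) (mul : T -> T -> T) (e : T) (inv : T -> T) : Prop :=
  [/\ forall x y z, mul x (mul y z) = mul (mul x y) z,
      forall x, mul e x = x,
      forall x, mul x e = x,
      forall x, mul (inv x) x = e &
      forall x, mul x (inv x) = e].

Fixpoint gnpow (T : Type) (mul : T -> T -> T) (e : T) (n : nat) (x : T) : T :=
  match n with 0 => e | n'.+1 => mul x (gnpow mul e n' x) end.

Definition gzpow (T : Type) (mul : T -> T -> T) (e : T) (inv : T -> T)
    (z : int) (x : T) : T :=
  match z with
  | Posz n => gnpow mul e n x
  | Negz n => inv (gnpow mul e n.+1 x)
  end.

Definition zpm_adj (T : Type) (mul : T -> T -> T) (e : T) (inv : T -> T)
    (x y : T) : Prop :=
  x <> y /\ exists n : int, n <> 0%R /\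
    (y = gzpow mul e inv n x \/ x = gzpow mul e inv n y).

Definition zpm_adjQ (x y : rat) : Prop :=
  x <> y /\ exists n : int, n <> 0%R /\ (y = (x *~ n)%R \/ x = (y *~ n)%R).

(* The isolated vertex of a power graph is the identity, so G is
   torsion-free.  Two properties of the power graph of Q transfer along the
   isomorphism.  First, two non-adjacent non-isolated vertices have three
   universal common neighbours (in Q: plus or minus their gcd, and their lcm);
   in a torsion-free group at most two of them, s and s^-1, are common powers
   of the two vertices, so any two elements are powers of a common element.
   Fixing g <> e, x = s^a and g = s^b then yields an embedding x |-> a / b of
   G into Q.  Second, for adjacent y and m = k y there is a vertex mirroring m
   through y (in Q: y / k); applied to Y and Y^n in G it produces a root of Y
   of an order dividing n, so G is divisible and the embedding is onto. *)

From HB Require Import structures.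
From mathcomp Require Import all_boot all_order all_algebra.
From mathcomp Require Import zify ring lra.
From Stdlib Require Import Classical ClassicalEpsilon.
Set Implicit Arguments. Unset Strict Implicit. Unset Printing Implicit Defensive.
Import GRing.Theory Num.Theory.

Section GraphProperties.
Variables (V : Type) (R : V -> V -> Prop).

Definition universal_common_nbr (a b s : V) :=
  [/\ R s a, R s b & forall w, R w a -> R w b -> w <> s -> R w s].

Definition three_universal_nbrs :=
  forall q r, q <> r -> ~ R q r -> (exists z, R q z) -> (exists z, R r z) ->
  exists s1 s2 s3, [/\ s1 <> s2, s1 <> s3, s2 <> s3 &
    [/\ universal_common_nbr q r s1, universal_common_nbr q r s2
      & universal_common_nbr q r s3]].

(* In the power graph of Q with m = k y, the vertex d is y / k: the
   reflection of m through y. *)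
Definition reflection_at (y m : V) :=
  exists d, [/\ R d y, R d m,
    forall w, R w y -> ~ R w m -> w <> m -> R w d \/ w = d,
    exists w, [/\ R w y, ~ R w d & w <> d] &
    ~ exists t, [/\ ~ R t y, t <> y, universal_common_nbr t y d
                  & universal_common_nbr t y m]].

Definition reflection_prop :=
  forall y m w, R y m -> R w y -> ~ R w m -> w <> m -> reflection_at y m.

Lemma universal_common_nbrP a b s w : universal_common_nbr a b s ->
  R w a -> R w b -> ~ R w s -> w = s.
Proof. by case=> _ _ sU wa wb nws; apply: NNPP => /(sU w wa wb). Qed.

End GraphProperties.

Section GraphIsomorphism.
Variables (V W : Type) (R1 : V -> V -> Prop) (R2 : W -> W -> Prop) (f : V -> W).
Hypotheses (f_bij : bijective f) (f_adj : forall x y, R1 x y <-> R2 (f x) (f y)).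

Lemma iso_surj w : exists v, w = f v.
Proof. by case: f_bij => g _ gK; exists (g w). Qed.

Lemma iso_neq x y : x <> y -> f x <> f y.
Proof. by move=> xy /(bij_inj f_bij). Qed.

Lemma universal_common_nbr_iso a b s :
  universal_common_nbr R1 a b s <-> universal_common_nbr R2 (f a) (f b) (f s).
Proof.
split=> -[sa sb sU]; split; try exact/f_adj.
- move=> w'; have [w -> wa wb ws] := iso_surj w'.
  by apply/f_adj/sU; [apply/f_adj | apply/f_adj | move=> E; apply: ws; rewrite E].
- by move=> w wa wb ws; apply/f_adj/sU; [apply/f_adj | apply/f_adj | apply: iso_neq].
Qed.

Lemma three_universal_nbrs_iso :
  three_universal_nbrs R2 -> three_universal_nbrs R1.
Proof.
move=> H q r qr nqr [z1 qz1] [z2 rz2].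
have [s1' [s2' [s3' [s12 s13 s23 [U1 U2 U3]]]]] :=
  H _ _ (iso_neq qr) (fun h => nqr (proj2 (f_adj _ _) h))
    (ex_intro _ _ (proj1 (f_adj _ _) qz1)) (ex_intro _ _ (proj1 (f_adj _ _) rz2)).
have [s1 E1] := iso_surj s1'; have [s2 E2] := iso_surj s2'.
have [s3 E3] := iso_surj s3'; subst s1' s2' s3'.
exists s1, s2, s3; split; try by move=> E; rewrite E in s12 s13 s23.
by split; apply/universal_common_nbr_iso.
Qed.

Lemma reflection_at_iso y m :
  reflection_at R2 (f y) (f m) -> reflection_at R1 y m.
Proof.
case=> d' [dy dm dOpp [w1' [w1y w1d w1ne]] noT].
have [d Ed] := iso_surj d'; have [w1 Ew1] := iso_surj w1'; subst d' w1'.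
exists d; split; try exact/f_adj.
- move=> w wy nwm wm.
  case: (dOpp (f w) (proj1 (f_adj _ _) wy) (fun h => nwm (proj2 (f_adj _ _) h))
    (iso_neq wm)) => [/f_adj|/(bij_inj f_bij)]; by [left | right].
- exists w1; split; [exact/f_adj | by move/f_adj | by move=> E; rewrite E in w1ne].
- case=> t [nty ty Ud Um]; apply: noT; exists (f t); split.
  + by move/f_adj.
  + exact: iso_neq.
  + exact/universal_common_nbr_iso.
  + exact/universal_common_nbr_iso.
Qed.

Lemma reflection_prop_iso : reflection_prop R2 -> reflection_prop R1.
Proof.
move=> H y m w ym wy nwm wm; apply: reflection_at_iso.
by apply: (H _ _ (f w)); [apply/f_adj | apply/f_adj | move/f_adj | apply: iso_neq].
Qed.

End GraphIsomorphism.

Local Open Scope ring_scope.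

Definition zpm_adjZ (i j : int) : Prop :=
  i <> j /\ exists t : int, t <> 0 /\ (j = i * t \/ i = j * t).

Lemma zpm_adjZ_sym i j : zpm_adjZ i j -> zpm_adjZ j i.
Proof.
case=> ij [t [t0 E]]; split; first by move/esym.
by exists t; split=> //; case: E; [right | left].
Qed.

Lemma zpm_adjZ1 (j : int) : 2 <= `|j| -> zpm_adjZ 1 j.
Proof. by move=> j2; split; [lia | exists j; split; [lia | left; rewrite mul1r]]. Qed.

Lemma mulz_eq1 (a b : int) : a * b = 1 -> a = 1 \/ a = -1.
Proof.
move=> ab1; have : b <> 0 by move=> b0; rewrite b0 mulr0 in ab1.
have [a_le|[a0|a_ge]] : a <= -1 \/ a = 0 \/ 1 <= a by lia.
all: nia.
Qed.

Lemma mulz_neq1 (a b : int) : 2 <= `|a| -> a * b <> 1.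
Proof. by move=> a2 /mulz_eq1; lia. Qed.

Lemma mulzD1_neq (a b : int) : 2 <= `|a| -> a * b + 1 <> a.
Proof.
move=> a2 E; apply: (mulz_neq1 (b := 1 - b) a2).
by rewrite mulrBr mulr1 -{1}E; ring.
Qed.

Lemma ndvdz_lt (x y t : int) : x <> 0 -> `|x| < `|y| -> x <> y * t.
Proof.
move=> x0 xy E; have t0 : t <> 0 by move=> t0; apply: x0; rewrite E t0 mulr0.
by move: xy; rewrite E normrM; nia.
Qed.

Lemma ltz_abs_sqrD1 (c : int) : `|c| < `|c * c + 1|.
Proof.
have cc : 0 <= c * c + 1 by rewrite -expr2 addr_ge0 ?sqr_ge0.
rewrite (ger0_norm cc); have [c0|c0] : 0 <= c \/ c < 0 by lia.
- by rewrite (ger0_norm c0); nia.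
- by rewrite (ltr0_norm c0); nia.
Qed.

Lemma ltz_abs_mulD1 (a b : int) : 2 <= `|a| -> 2 <= `|b| -> `|a| < `|a * b + 1|.
Proof.
move=> a2 b2; have := ler_normD (a * b + 1) (-1).
rewrite addrK normrN normrM normr1.
by move: (`|a|) (`|b|) a2 b2 => A B; nia.
Qed.

Lemma nadjZ_sqrD1 (c : int) : 2 <= `|c| -> ~ zpm_adjZ c (c * c + 1).
Proof.
move=> c2 [_ [t [_ [E|E]]]].
- by apply: (mulz_neq1 (b := t - c) c2); rewrite mulrBr -E; ring.
- by apply: (ndvdz_lt _ (ltz_abs_sqrD1 c) E); lia.
Qed.

Lemma nadjZ_mulD1 (a b : int) : 2 <= `|a| -> 2 <= `|b| -> ~ zpm_adjZ (a * b + 1) a.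
Proof.
move=> a2 b2 [_ [t [_ [E|E]]]].
- by apply: (ndvdz_lt _ (ltz_abs_mulD1 a2 b2) E); lia.
- by apply: (mulz_neq1 (b := t - b) a2); rewrite mulrBr -E; ring.
Qed.

Section PowerGraphQ.
Local Notation adjQ := zpm_adjQ.

Lemma adjQ_sym x y : adjQ x y -> adjQ y x.
Proof.
case=> xy [n [n0 E]]; split; first by move/esym.
by exists n; split=> //; case: E; [right | left].
Qed.

Lemma adjQ0 z : ~ adjQ 0 z.
Proof.
case=> z0 [n [n0 [E|/esym/eqP]]]; first by apply: z0; rewrite E mul0rz.
by rewrite mulrz_eq0 => /orP[/eqP | /eqP z00]; last apply: z0.
Qed.

Lemma adjQ_neq0 x y : adjQ x y -> x <> 0 /\ y <> 0.
Proof.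
move=> xy; split=> E; first by apply: (@adjQ0 y); rewrite -E.
by apply: (@adjQ0 x); apply: adjQ_sym; rewrite -E.
Qed.

Lemma adjQ_or_eq x y (n : int) : n <> 0 -> y = x *~ n -> adjQ x y \/ x = y.
Proof.
move=> n0 E; case: (classic (x = y)) => xy; [by right | left].
by split=> //; exists n; split=> //; left.
Qed.

Lemma adjQN w y : adjQ w y -> w <> - y -> adjQ w (- y).
Proof.
case=> _ [n [n0 [E|E]]] wy; split=> //; exists (- n); (split; first lia).
- by left; rewrite E mulrNz.
- by right; rewrite E mulrNz mulNrz opprK.
Qed.

Lemma adjQ12 : adjQ 1 2.
Proof. by split=> //; exists 2; split=> //; left. Qed.

Lemma mulrz_inj (x : rat) (a b : int) : x <> 0 -> x *~ a = x *~ b -> a = b.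
Proof. by move/eqP/mulrIz; apply. Qed.

Lemma rat_mulz_surj (q : rat) (n : int) : n <> 0 -> exists z, q = z *~ n.
Proof.
move=> n0; exists (q / n%:~R).
by rewrite -mulrzr divfK // intr_eq0; apply/eqP.
Qed.

Lemma adjQ_mulz x (i j : int) : x <> 0 -> adjQ (x *~ i) (x *~ j) <-> zpm_adjZ i j.
Proof.
move=> x0; split=> -[ij [t [t0 E]]]; split.
- by move=> E'; apply: ij; rewrite E'.
- exists t; split=> //.
  by case: E => E; [left | right]; apply: (mulrz_inj x0); rewrite mulrzA.
- by move/(mulrz_inj x0).
- by exists t; split=> //; case: E => ->; [left | right]; rewrite mulrzA.
Qed.

Lemma adjQ_inv x y : adjQ x y -> adjQ x^-1 y^-1.
Proof.
case=> xy [n [n0 E]]; split; first by move/invr_inj.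
have nR : n%:~R != 0 :> rat by rewrite intr_eq0; apply/eqP.
exists n; split=> //; case: E => ->; [right | left];
  by rewrite -[_ *~ n]mulrzr -mulrzr invfM mulfVK.
Qed.

Lemma rat_coprime_decomp (q r : rat) : q <> 0 -> r <> 0 ->
  exists (d : rat) (a b u v : int),
    [/\ d <> 0, q = d *~ a, r = d *~ b & u * a + v * b = 1].
Proof.
move=> q0 r0.
set A := numq q * denq r; set C := numq r * denq q; set D := denq q * denq r.
have A0 : A != 0 by rewrite mulf_eq0 negb_or numq_eq0 denq_neq0 andbT; apply/eqP.
set g := gcdz A C.
have g0 : g != 0 by rewrite gcdz_eq0 negb_and A0.
have D0 : D%:~R != 0 :> rat by rewrite intr_eq0 mulf_eq0 negb_or !denq_neq0.
have [u [v Huv]] := Bezoutz A C.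
exists (g%:~R / D%:~R), (A %/ g)%Z, (C %/ g)%Z, u, v; split.
- by apply/eqP; rewrite mulf_eq0 negb_or intr_eq0 g0 /= invr_eq0.
- rewrite -mulrzr mulrAC -intrM (mulrC g) divzK ?dvdz_gcdl //.
  rewrite /A /D !intrM -[q in LHS]divq_num_den.
  by field; rewrite !intr_eq0 !denq_neq0.
- rewrite -mulrzr mulrAC -intrM (mulrC g) divzK ?dvdz_gcdr //.
  rewrite /C /D !intrM -[r in LHS]divq_num_den.
  by field; rewrite !intr_eq0 !denq_neq0.
- apply/eqP; rewrite -(inj_eq (mulIf g0)) mulrDl -!mulrA.
  by rewrite !divzK ?dvdz_gcdl ?dvdz_gcdr // mul1r; apply/eqP.
Qed.

Lemma common_multiple_adjQ q r W (n m : int) : q <> r -> ~ adjQ q r ->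
  n <> 0 -> m <> 0 -> W = q *~ n -> W = r *~ m -> adjQ W q /\ adjQ W r.
Proof.
move=> qr nqr n0 m0 Eq Er; split.
- case: (adjQ_or_eq n0 Eq) => [/adjQ_sym //|qW]; exfalso; rewrite -qW in Er.
  by case: (adjQ_or_eq m0 Er) => [/adjQ_sym|/esym].
- case: (adjQ_or_eq m0 Er) => [/adjQ_sym //|rW]; exfalso; rewrite -rW in Eq.
  by case: (adjQ_or_eq n0 Eq).
Qed.

Lemma common_divisor_adjQ q r W (n m : int) : q <> r -> ~ adjQ q r ->
  n <> 0 -> m <> 0 -> q = W *~ n -> r = W *~ m -> adjQ W q /\ adjQ W r.
Proof.
move=> qr nqr n0 m0 Eq Er; split.
- case: (adjQ_or_eq n0 Eq) => // Wq; exfalso; rewrite Wq in Er.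
  by case: (adjQ_or_eq m0 Er).
- case: (adjQ_or_eq m0 Er) => // Wr; exfalso; rewrite Wr in Eq.
  by case: (adjQ_or_eq n0 Eq) => [/adjQ_sym|/esym].
Qed.

Lemma oppr_neq (d : rat) : d <> 0 -> d <> - d.
Proof.
by move=> d0 /eqP; rewrite -addr_eq0 -mulr2n mulrn_eq0 => /eqP.
Qed.

Lemma adjQ_mulz1 x (j : int) : x <> 0 -> adjQ x (x *~ j) <-> zpm_adjZ 1 j.
Proof. by move=> x0; rewrite -{1}(mulr1z x); apply: adjQ_mulz. Qed.

Lemma sqrD1_nadjQ X (c : int) : X <> 0 -> 2 <= `|c| ->
  X *~ (c * c + 1) <> X *~ c /\ ~ adjQ (X *~ (c * c + 1)) (X *~ c).
Proof.
move=> X0 c2; split; first by move/(mulrz_inj X0); nia.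
by move/(adjQ_mulz _ _ X0)/zpm_adjZ_sym; apply: nadjZ_sqrD1.
Qed.

(* For coprime [a], [b]: [d A] is plus or minus the gcd [d] or the lcm [d a b]
   of [d a] and [d b]. *)
Definition univ_index (a b A : int) :=
  A = 1 \/ A = -1 \/ A = a * b \/ A = - (a * b).

Section CoprimeMultiplesQ.
Variables (d : rat) (a b u v : int).
Hypotheses (d0 : d <> 0) (a0 : a <> 0) (b0 : b <> 0) (bezout : u * a + v * b = 1)
  (ab_neq : d *~ a <> d *~ b) (ab_nadj : ~ adjQ (d *~ a) (d *~ b)).

(* A common neighbour is either a common multiple, hence a multiple of the
   lcm [d a b], or a common divisor, hence (Bezout) a divisor of [d]. *)
Lemma common_nbrQ_cases W : adjQ W (d *~ a) -> adjQ W (d *~ b) ->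
  (exists c, c <> 0 /\ W = d *~ (a * b * c)) \/ (exists c, c <> 0 /\ d = W *~ c).
Proof.
move=> Wa Wb; have [W0 _] := adjQ_neq0 Wa.
have dE : d = (d *~ a) *~ u + (d *~ b) *~ v.
  by rewrite -!mulrzA -mulrzDr (mulrC a) (mulrC b) bezout mulr1z.
case: Wa => _ [i [i0 [Ea|Ea]]]; case: Wb => _ [j [j0 [Eb|Eb]]].
- right; exists (i * u + j * v); split.
  + by move=> E; apply: d0; rewrite dE Ea Eb -!mulrzA -mulrzDr E mulr0z.
  + by rewrite dE Ea Eb -!mulrzA -mulrzDr.
- exfalso; have E : d *~ a = (d *~ b) *~ (j * i) by rewrite mulrzA -Eb.
  by case: (adjQ_or_eq (n := j * i) ltac:(nia) E) => [/adjQ_sym|/esym].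
- exfalso; have E : d *~ b = (d *~ a) *~ (i * j) by rewrite mulrzA -Ea.
  by case: (adjQ_or_eq (n := i * j) ltac:(nia) E).
- left; move: Eb; rewrite Ea -!mulrzA => /(mulrz_inj d0) Eij.
  have Hc : a * i = a * b * (u * j + v * i).
    have -> : a * b * (u * j + v * i) = u * a * (b * j) + v * b * (a * i) by ring.
    by rewrite -Eij -mulrDl bezout mul1r.
  exists (u * j + v * i); split.
  + by move=> E; apply: W0; rewrite Ea -mulrzA Hc E mulr0 mulr0z.
  + by rewrite Hc.
Qed.

Lemma universal_gcdQ : universal_common_nbr adjQ (d *~ a) (d *~ b) d.
Proof.
have [da db] := common_divisor_adjQ ab_neq ab_nadj a0 b0 erefl erefl.
split=> // W Wa Wb Wd; case: (common_nbrQ_cases Wa Wb) => [[c [c0 E]]|[c [c0 E]]].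
- by case: (adjQ_or_eq (n := a * b * c) ltac:(nia) E) => [/adjQ_sym|/esym].
- by case: (adjQ_or_eq c0 E).
Qed.

Lemma universal_opp_gcdQ : universal_common_nbr adjQ (d *~ a) (d *~ b) (- d).
Proof.
have [da db] := common_divisor_adjQ (W := - d) (n := - a) (m := - b) ab_neq ab_nadj
  ltac:(lia) ltac:(lia) ltac:(by rewrite mulNrNz) ltac:(by rewrite mulNrNz).
have [_ _ dU] := universal_gcdQ.
split=> // W Wa Wb Wd; case: (classic (W = d)) => [->|Wd'].
- by split; [apply: oppr_neq | exists (-1); split=> //; left; rewrite mulrN1z].
- exact: adjQN (dU W Wa Wb Wd') Wd.
Qed.

Lemma universal_lcmQ : universal_common_nbr adjQ (d *~ a) (d *~ b) (d *~ (a * b)).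
Proof.
have [La Lb] := common_multiple_adjQ (W := d *~ (a * b)) (n := b) (m := a) ab_neq ab_nadj b0 a0
  ltac:(by rewrite mulrzA) ltac:(by rewrite mulrC mulrzA).
split=> // W Wa Wb WL; case: (common_nbrQ_cases Wa Wb) => [[c [c0 E]]|[c [c0 E]]].
- have E' : W = d *~ (a * b) *~ c by rewrite -mulrzA.
  by case: (adjQ_or_eq c0 E') => [/adjQ_sym|/esym].
- have E' : d *~ (a * b) = W *~ (c * (a * b)) by rewrite [RHS]mulrzA -E.
  by case: (adjQ_or_eq (n := c * (a * b)) ltac:(nia) E').
Qed.

Lemma universal_common_nbrQ_cases s : universal_common_nbr adjQ (d *~ a) (d *~ b) s ->
  exists A, s = d *~ A /\ univ_index a b A.
Proof.
move=> Us; have [sa sb _] := Us; have [s0 _] := adjQ_neq0 sa.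
case: (common_nbrQ_cases sa sb) => [[c [c0 E]]|[c [c0 E]]].
- exists (a * b * c); split=> //.
  case: (classic (2 <= `|c|)) => c2; last first.
    have [->|->] : c = 1 \/ c = -1 by lia.
    + by right; right; left; rewrite mulr1.
    + by right; right; right; rewrite mulrN1.
  have L0 : d *~ (a * b) <> 0 by move/eqP; rewrite mulrz_eq0; case/orP=> /eqP; [nia | exact: d0].
  have [neq nadj] := sqrD1_nadjQ L0 c2.
  have [Wa Wb] := common_multiple_adjQ (W := d *~ (a * b) *~ (c * c + 1))
    (n := b * (c * c + 1)) (m := a * (c * c + 1))
    ab_neq ab_nadj ltac:(nia) ltac:(nia)
    ltac:(by rewrite -!mulrzA; congr (_ *~ _); ring)
    ltac:(by rewrite -!mulrzA; congr (_ *~ _); ring).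
  have Es : s = d *~ (a * b) *~ c by rewrite E mulrzA.
  by exfalso; apply: neq; rewrite -Es; apply: (universal_common_nbrP Us Wa Wb); rewrite Es.
- case: (classic (2 <= `|c|)) => c2; last first.
    have [c1|c1] : c = 1 \/ c = -1 by lia.
    + by exists 1; split; [rewrite E c1 !mulr1z | left].
    + by exists (-1); split; [rewrite E c1 !mulrN1z opprK | right; left].
  exfalso; have [z Es] := rat_mulz_surj s (n := c * c + 1) ltac:(nia).
  have z0 : z <> 0 by move=> z0; apply: s0; rewrite Es z0 mul0rz.
  have [neq nadj] := sqrD1_nadjQ z0 c2.
  have [Wa Wb] := common_divisor_adjQ (W := z *~ c) (n := (c * c + 1) * a)
    (m := (c * c + 1) * b) ab_neq ab_nadj ltac:(nia) ltac:(nia)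
    ltac:(by rewrite E Es -!mulrzA; congr (_ *~ _); ring)
    ltac:(by rewrite E Es -!mulrzA; congr (_ *~ _); ring).
  apply: neq; rewrite -Es (universal_common_nbrP Us Wa Wb) //.
  by move/adjQ_sym; rewrite Es.
Qed.

End CoprimeMultiplesQ.

Lemma three_universal_nbrsQ : three_universal_nbrs adjQ.
Proof.
move=> q r qr nqr [z1 qz1] [z2 rz2].
have [q0 _] := adjQ_neq0 qz1; have [r0 _] := adjQ_neq0 rz2.
have [d [a [b [u [v [d0 Eq Er bezout]]]]]] := rat_coprime_decomp q0 r0.
have a0 : a <> 0 by move=> a0; apply: q0; rewrite Eq a0 mulr0z.
have b0 : b <> 0 by move=> b0; apply: r0; rewrite Er b0 mulr0z.
subst q r.
have ab_unit (e : int) : d *~ e = d *~ (a * b) -> e <> 1 /\ e <> -1.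
  move/(mulrz_inj d0) => eab; split=> e1; rewrite e1 in eab.
  - have ab1 : a * b = 1 by [].
    by apply: qr; congr (_ *~ _); case: (mulz_eq1 ab1) => a1; rewrite a1 in ab1 *; lia.
  - have ab1 : a * (- b) = 1 by rewrite mulrN -eab opprK.
    have Eb : b = - a by case: (mulz_eq1 ab1) => a1; rewrite a1 in ab1 *; lia.
    have E : d *~ b = d *~ a *~ (-1) by rewrite Eb mulrN1z mulrNz.
    by case: (adjQ_or_eq (n := -1) ltac:(lia) E).
exists d, (- d), (d *~ (a * b)); split.
- exact: oppr_neq.
- by move=> E; apply: (proj1 (ab_unit 1 _)); rewrite ?mulr1z.
- by move=> E; apply: (proj2 (ab_unit (-1) _)); rewrite ?mulrN1z.
- split; [exact: (universal_gcdQ d0 a0 b0 bezout qr nqr)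
  | exact: (universal_opp_gcdQ d0 a0 b0 bezout qr nqr)
  | exact: (universal_lcmQ d0 a0 b0 bezout qr nqr)].
Qed.

Lemma univ_index_sq_ratio (al be A B k : int) : 2 <= `|k| ->
  al <> be -> al <> - be -> be <> 0 -> be = A * k -> B = be * k ->
  univ_index al be A -> univ_index al be B -> False.
Proof.
move=> k2 al_be al_Nbe be0 EA EB.
have k2' : k <= -2 \/ 2 <= k by lia.
case=> [|[|[|]]] EA'; subst A.
- by case=> [|[|[|]]]; nia.
- by case=> [|[|[|]]]; nia.
- move=> _; apply: (mulz_neq1 (b := al) k2); apply: (mulfI (introN eqP be0)).
  by rewrite mulr1 [RHS]EA; ring.
- move=> _; apply: (mulz_neq1 (b := - al) k2); apply: (mulfI (introN eqP be0)).
  by rewrite mulr1 [RHS]EA; ring.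
Qed.

Section ReflectionQ.
Variables (x : rat) (k : int).
Hypotheses (x0 : x <> 0) (k2 : 2 <= `|k|).

Lemma reflectionQ_dominates w : adjQ w (x *~ k) -> ~ adjQ w (x *~ (k * k)) ->
  w <> x *~ (k * k) -> adjQ w x \/ w = x.
Proof.
have k0 : k <> 0 by lia.
case=> _ [i [i0 [E|E]]] nwm wm.
- have E' : x *~ (k * k) = w *~ (i * k) by rewrite mulrzA E -mulrzA.
  by case: (adjQ_or_eq (n := i * k) ltac:(nia) E').
- have E' : w = x *~ (k * i) by rewrite E -mulrzA.
  by case: (adjQ_or_eq (n := k * i) ltac:(nia) E') => [/adjQ_sym|/esym]; [left | right].
Qed.

Lemma reflectionQ_nondominated : exists w, [/\ adjQ w (x *~ k), ~ adjQ w x & w <> x].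
Proof.
have k2' : k <= -2 \/ 2 <= k by lia.
have [z Ex] := rat_mulz_surj x (n := k * k + 1) ltac:(nia).
have z0 : z <> 0 by move=> z0; apply: x0; rewrite Ex z0 mul0rz.
have [neq nadj] := sqrD1_nadjQ z0 k2.
exists (z *~ k); split.
- rewrite Ex -mulrzA adjQ_mulz //; split; first by nia.
  by exists (k * k + 1); split; [nia | left; ring].
- by move/adjQ_sym; rewrite Ex.
- by rewrite Ex => /esym.
Qed.

Lemma reflectionQ_no_common_universal : ~ exists t,
  [/\ ~ adjQ t (x *~ k), t <> x *~ k, universal_common_nbr adjQ t (x *~ k) x
    & universal_common_nbr adjQ t (x *~ k) (x *~ (k * k))].
Proof.
case=> t [nty ty Ux Um].
have [xt _ _] := Ux; have [_ t0] := adjQ_neq0 xt.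
have y0 : x *~ k <> 0 by move/eqP; rewrite mulrz_eq0 => /orP[/eqP|/eqP //]; lia.
have [d [al [be [u [v [d0 Et Ey bezout]]]]]] := rat_coprime_decomp t0 y0.
have al0 : al <> 0 by move=> al0; apply: t0; rewrite Et al0 mulr0z.
have be0 : be <> 0 by move=> be0; apply: y0; rewrite Ey be0 mulr0z.
rewrite Et Ey in nty ty Ux Um.
have [A [EA iA]] := universal_common_nbrQ_cases d0 al0 be0 bezout ty nty Ux.
have [B [EB iB]] := universal_common_nbrQ_cases d0 al0 be0 bezout ty nty Um.
apply: (univ_index_sq_ratio k2 _ _ be0 _ _ iA iB).
- by move=> E; apply: ty; rewrite E.
- move=> E; apply: nty; rewrite E adjQ_mulz //; split; first lia.
  by exists (-1); split=> //; left; rewrite mulrN1 opprK.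
- by apply: (mulrz_inj d0); rewrite -Ey EA -mulrzA.
- by apply: (mulrz_inj d0); rewrite -EB !mulrzA -Ey.
Qed.

Lemma reflection_atQ : reflection_at adjQ (x *~ k) (x *~ (k * k)).
Proof.
have k1 : k <> 1 /\ k <> -1 by lia.
have kk : k * k <> 0 by apply/eqP; rewrite mulf_neq0 //; apply/eqP; lia.
exists x; split.
- by apply/(adjQ_mulz1 _ x0); split; [lia | exists k; split; [lia | left; ring]].
- apply/(adjQ_mulz1 _ x0); split; first by move/esym; apply: mulz_neq1.
  by exists (k * k); split=> //; left; ring.
- exact: reflectionQ_dominates.
- exact: reflectionQ_nondominated.
- exact: reflectionQ_no_common_universal.
Qed.

End ReflectionQ.

Lemma inv_mulzQ (y : rat) (k : int) : k <> 0 -> (y *~ k)^-1 *~ k = y^-1.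
Proof.
move=> k0; have kR : k%:~R != 0 :> rat by rewrite intr_eq0; apply/eqP.
by rewrite -[_^-1 *~ k]mulrzr -[y *~ k]mulrzr invfM mulfVK.
Qed.

Lemma reflection_at_mulQ (y : rat) (k : int) : y <> 0 -> 2 <= `|k| ->
  reflection_at adjQ y (y *~ k).
Proof.
move=> y0 k2; have [x Ey] := rat_mulz_surj y (n := k) ltac:(lia).
have x0 : x <> 0 by move=> x0; apply: y0; rewrite Ey x0 mul0rz.
by rewrite Ey -mulrzA; apply: reflection_atQ.
Qed.

(* Inversion is an automorphism of the power graph of Q exchanging the cases
   [m = k y] and [y = k m]. *)
Lemma reflection_propQ : reflection_prop adjQ.
Proof.
have inv_bij : bijective (@GRing.inv rat) by exists GRing.inv; apply: invrK.
have inv_adj x y : adjQ x y <-> adjQ x^-1 y^-1.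
  by split=> [/adjQ_inv // | /adjQ_inv]; rewrite !invrK.
move=> y m w ym wy nwm wm; have [y0 m0] := adjQ_neq0 ym.
have [k k2 [Em|Ey]] : exists2 k, 2 <= `|k| & m = y *~ k \/ y = m *~ k.
  case: ym => ym [k [k0 E]]; exists k => //.
  have k1 : k <> 1 by move=> k1; rewrite k1 !mulr1z in E; case: E => E; apply: ym.
  suff : k <> -1 by lia.
  move=> kN1; have Em : m = - y by case: E; rewrite kN1 !mulrN1z => ->; rewrite ?opprK.
  by apply: nwm; rewrite Em; apply: adjQN => //; rewrite -Em.
- by rewrite Em; apply: reflection_at_mulQ.
- apply: (reflection_at_iso inv_bij inv_adj).
  rewrite Ey -(inv_mulzQ m (k := k)); last by lia.
  apply: reflection_at_mulQ => //.
  by move/eqP; rewrite invr_eq0 mulrz_eq0 => /orP[/eqP|/eqP //]; lia.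
Qed.

End PowerGraphQ.

Section Group.
Variables (T : Type) (mul : T -> T -> T) (e : T) (inv : T -> T).
Hypothesis HG : is_group mul e inv.

Local Notation "x ** y" := (mul x y) (at level 40, left associativity).
Local Notation "x ^^ n" := (gzpow mul e inv n x) (at level 29, left associativity).
Local Notation gnpow := (gnpow mul e).
Local Notation adj := (zpm_adj mul e inv).

Lemma gmulA x y z : x ** (y ** z) = x ** y ** z. Proof. by case: HG. Qed.
Lemma gmul1l x : e ** x = x. Proof. by case: HG. Qed.
Lemma gmul1r x : x ** e = x. Proof. by case: HG. Qed.
Lemma gmulVl x : inv x ** x = e. Proof. by case: HG. Qed.
Lemma gmulVr x : x ** inv x = e. Proof. by case: HG. Qed.

Lemma ginv_uniq x y : x ** y = e -> y = inv x.
Proof. by move=> xy; rewrite -[y]gmul1l -(gmulVl x) -gmulA xy gmul1r. Qed.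

Lemma ginvK x : inv (inv x) = x.
Proof. by symmetry; apply: ginv_uniq; rewrite gmulVl. Qed.

Lemma ginvM x y : inv (x ** y) = inv y ** inv x.
Proof. by symmetry; apply: ginv_uniq; rewrite -gmulA (gmulA y) gmulVr gmul1l gmulVr. Qed.

Lemma ginv1 : inv e = e.
Proof. by symmetry; apply: ginv_uniq; rewrite gmul1l. Qed.

Lemma gnpowD m n x : gnpow (m + n) x = gnpow m x ** gnpow n x.
Proof. by elim: m => [|m IH] /=; rewrite ?gmul1l // IH gmulA. Qed.

Lemma gnpowSr n x : gnpow n.+1 x = gnpow n x ** x.
Proof. by rewrite -addn1 gnpowD /= gmul1r. Qed.

Lemma gzpow0 x : x ^^ 0 = e. Proof. by []. Qed.
Lemma gzpow1 x : x ^^ 1 = x. Proof. by rewrite /= gmul1r. Qed.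
Lemma gzpowN1 x : x ^^ (-1) = inv x. Proof. by rewrite /= gmul1r. Qed.

Lemma gzpowS (i : int) x : x ^^ (i + 1) = x ^^ i ** x.
Proof.
case: i => n.
- have -> : Posz n + 1 = Posz n.+1 by lia.
  exact: gnpowSr.
- have -> : Negz n + 1 = - (n%:Z) by rewrite NegzE; lia.
  case: n => [|n] /=; first by rewrite gmul1r gmulVl.
  by rewrite [in RHS]ginvM -gmulA gmulVl gmul1r.
Qed.

Lemma gzpowSN (i : int) x : x ^^ (i - 1) = x ^^ i ** inv x.
Proof. by rewrite -{2}(subrK 1 i) gzpowS -gmulA gmulVr gmul1r. Qed.

Lemma gzpowDn (i : int) (n : nat) x : x ^^ (i + n%:Z) = x ^^ i ** gnpow n x.
Proof.
elim: n => [|n IH]; first by rewrite addr0 /= gmul1r.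
have -> : i + n.+1%:Z = (i + n) + 1 by lia.
by rewrite gzpowS IH gnpowSr gmulA.
Qed.

Lemma gzpowBn (i : int) (n : nat) x : x ^^ (i - n%:Z) = x ^^ i ** inv (gnpow n x).
Proof.
elim: n => [|n IH]; first by rewrite subr0 /= ginv1 gmul1r.
have -> : i - n.+1%:Z = (i - n%:Z) - 1 by lia.
by rewrite gzpowSN IH /= ginvM gmulA.
Qed.

Lemma gzpowD (i j : int) x : x ^^ (i + j) = x ^^ i ** x ^^ j.
Proof.
case: j => n; first exact: gzpowDn.
by rewrite NegzE gzpowBn.
Qed.

Lemma gzpowN (i : int) x : x ^^ (- i) = inv (x ^^ i).
Proof. by apply: ginv_uniq; rewrite -gzpowD subrr. Qed.

Lemma gzpowM (i j : int) x : x ^^ (i * j) = (x ^^ i) ^^ j.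
Proof.
have gzpowMn (n : nat) : x ^^ (i * n%:Z) = (x ^^ i) ^^ n%:Z.
  elim: n => [|n IH]; first by rewrite mulr0.
  have -> : i * n.+1%:Z = i * n%:Z + i by lia.
  have -> : n.+1%:Z = n%:Z + 1 by lia.
  by rewrite [LHS]gzpowD IH gzpowS.
case: j => n; first exact: gzpowMn.
by rewrite NegzE mulrN !gzpowN gzpowMn.
Qed.

Lemma gzpowe (i : int) : e ^^ i = e.
Proof. by rewrite -(gzpow0 e) -gzpowM mul0r. Qed.

Lemma adj_sym x y : adj x y -> adj y x.
Proof.
case=> xy [n [n0 E]]; split; first by move/esym.
by exists n; split=> //; case: E; [right | left].
Qed.

Lemma adj_or_eq x y (n : int) : n <> 0 -> y = x ^^ n -> adj x y \/ x = y.
Proof.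
move=> n0 E; case: (classic (x = y)) => xy; [by right | left].
by split=> //; exists n; split=> //; left.
Qed.

Lemma adj_inv w x : adj w x -> w <> inv x -> adj w (inv x).
Proof.
case=> _ [n [n0 [E|E]]] wx; split=> //; exists (- n); (split; first lia).
- by left; rewrite E gzpowN.
- by right; rewrite E -gzpowN1 -gzpowM mulrNN mul1r.
Qed.

Lemma common_power_adj x y W (i j : int) : x <> y -> ~ adj x y ->
  i <> 0 -> j <> 0 -> W = x ^^ i -> W = y ^^ j -> adj W x /\ adj W y.
Proof.
move=> xy nxy i0 j0 Ex Ey; split.
- case: (adj_or_eq i0 Ex) => [/adj_sym //|xW]; exfalso; rewrite -xW in Ey.
  by case: (adj_or_eq j0 Ey) => [/adj_sym|/esym].
- case: (adj_or_eq j0 Ey) => [/adj_sym //|yW]; exfalso; rewrite -yW in Ex.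
  by case: (adj_or_eq i0 Ex).
Qed.

Lemma common_nbr_cases x y s : x <> y -> ~ adj x y -> adj s x -> adj s y ->
  (exists a b : int, x = s ^^ a /\ y = s ^^ b) \/
  (exists a b : int, [/\ a <> 0, b <> 0, s = x ^^ a & s = y ^^ b]).
Proof.
move=> xy nxy [_ [a [a0 [Ex|Ex]]]] [_ [b [b0 [Ey|Ey]]]].
- by left; exists a, b.
- exfalso; have E : x = y ^^ (b * a) by rewrite gzpowM -Ey.
  by case: (adj_or_eq (n := b * a) ltac:(nia) E) => [/adj_sym|/esym].
- exfalso; have E : y = x ^^ (a * b) by rewrite gzpowM -Ex.
  by case: (adj_or_eq (n := a * b) ltac:(nia) E).
- by right; exists a, b.
Qed.

(* Only the identity can be isolated: [x] is adjacent to [x^-1] or, when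
   [x^-1 = x], [e = x^2] is adjacent to [x]. *)
Lemma isolated_e x : (forall z, ~ adj x z) -> x = e.
Proof.
move=> x_iso; apply: NNPP => xe; case: (classic (inv x = x)) => xV.
- apply: (x_iso e); split=> //.
  by exists 2; split=> //; left; rewrite /= gmul1r -{2}xV gmulVr.
- apply: (x_iso (inv x)); split; first by move/esym.
  by exists (-1); split=> //; left; rewrite gzpowN1.
Qed.

Hypothesis e_isolated : forall z, ~ adj e z.

Lemma adj_neq_e x y : adj x y -> x <> e.
Proof. by move=> xy xe; rewrite xe in xy; apply: (e_isolated xy). Qed.

Lemma torsion_free x (n : int) : n <> 0 -> x ^^ n = e -> x = e.
Proof.
move=> n0 xn; apply: NNPP => xe; apply: (@e_isolated x); apply: adj_sym.
by split=> //; exists n; split=> //; left; rewrite xn.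
Qed.

Lemma gzpow_inj x (i j : int) : x <> e -> x ^^ i = x ^^ j -> i = j.
Proof.
move=> xe E; apply: NNPP => ij; apply: xe; apply: (@torsion_free x (i - j)).
- by move=> ij0; apply: ij; lia.
- by rewrite gzpowD E gzpowN gmulVr.
Qed.

Lemma adj_gzpow x (i j : int) : x <> e -> adj (x ^^ i) (x ^^ j) <-> zpm_adjZ i j.
Proof.
move=> xe; split=> -[ij [t [t0 E]]]; split.
- by move=> E'; apply: ij; rewrite E'.
- exists t; split=> //.
  by case: E => E; [left | right]; apply: (gzpow_inj xe); rewrite gzpowM.
- by move/(gzpow_inj xe).
- by exists t; split=> //; case: E => ->; [left | right]; rewrite gzpowM.
Qed.

Lemma adj_gzpow1 x (j : int) : x <> e -> adj x (x ^^ j) <-> zpm_adjZ 1 j.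
Proof. by move=> xe; rewrite -{1}(gzpow1 x); apply: adj_gzpow. Qed.

Lemma sqrD1_nadj s (c : int) : s <> e -> 2 <= `|c| ->
  s ^^ (c * c + 1) <> s ^^ c /\ ~ adj (s ^^ (c * c + 1)) (s ^^ c).
Proof.
move=> se c2; split; first by move/(gzpow_inj se); nia.
by move/(adj_gzpow _ _ se)/zpm_adjZ_sym; apply: nadjZ_sqrD1.
Qed.

Lemma universal_common_power_exp x y s t (a b k : int) : x <> y -> ~ adj x y ->
  a <> 0 -> b <> 0 -> s = x ^^ a -> s = y ^^ b ->
  universal_common_nbr adj x y t -> t = s ^^ k -> t <> s -> k = -1.
Proof.
move=> xy nxy a0 b0 Ex Ey Ut Et ts; have [tx _ _] := Ut.
have se : s <> e by move=> se; apply: (adj_neq_e tx); rewrite Et se gzpowe.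
apply: NNPP => kN1; have k2 : 2 <= `|k|.
  have k0 : k <> 0 by move=> k0; apply: (adj_neq_e tx); rewrite Et k0.
  have k1 : k <> 1 by move=> k1; apply: ts; rewrite Et k1 gzpow1.
  lia.
have [neq nadj] := sqrD1_nadj se k2.
have [Wx Wy] := common_power_adj (W := s ^^ (k * k + 1)) (i := a * (k * k + 1))
  (j := b * (k * k + 1)) xy nxy ltac:(nia) ltac:(nia)
  ltac:(by rewrite Ex gzpowM) ltac:(by rewrite Ey gzpowM).
by apply: neq; rewrite -Et; apply: (universal_common_nbrP Ut Wx Wy); rewrite Et.
Qed.

Lemma universal_common_powers_inv x y s t (a b a' b' : int) : x <> y -> ~ adj x y ->
  a <> 0 -> b <> 0 -> s = x ^^ a -> s = y ^^ b ->
  a' <> 0 -> b' <> 0 -> t = x ^^ a' -> t = y ^^ b' ->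
  universal_common_nbr adj x y s -> universal_common_nbr adj x y t -> t <> s -> t = inv s.
Proof.
move=> xy nxy a0 b0 Esx Esy a0' b0' Etx Ety Us Ut ts.
have [tx ty _] := Ut; have [_ _ sU] := Us.
case: (sU t tx ty ts) => _ [k [k0 [E|E]]].
- have := universal_common_power_exp xy nxy a0' b0' Etx Ety Us E (nesym ts).
  by move=> kN1; rewrite E kN1 gzpowN1 ginvK.
- have := universal_common_power_exp xy nxy a0 b0 Esx Esy Ut E ts.
  by move=> kN1; rewrite E kN1 gzpowN1.
Qed.

Hypothesis three_universal : three_universal_nbrs adj.

(* Of three universal common neighbours of non-adjacent [x] and [y], at most
   two ([s] and [s^-1]) are common powers of [x] and [y]; the third one has
   both [x] and [y] among its powers. *)
Lemma pair_cyclic x y : exists s (a b : int), x = s ^^ a /\ y = s ^^ b.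
Proof.
case: (classic (x = e)) => [->|xe]; first by exists y, 0, 1; rewrite gzpow1.
case: (classic (y = e)) => [->|ye]; first by exists x, 1, 0; rewrite gzpow1.
case: (classic (x = y)) => [<-|xy]; first by exists x, 1, 1; rewrite gzpow1.
case: (classic (adj x y)) => [[_ [n [_ [E|E]]]]|nxy].
  by exists x, 1, n; rewrite gzpow1.
  by exists y, n, 1; rewrite gzpow1.
have x2 : adj x (x ^^ 2).
  by apply/(adj_gzpow1 _ xe); split=> //; exists 2; split=> //; left.
have y2 : adj y (y ^^ 2).
  by apply/(adj_gzpow1 _ ye); split=> //; exists 2; split=> //; left.
have [s1 [s2 [s3 [s12 s13 s23 [U1 U2 U3]]]]] :=
  three_universal xy nxy (ex_intro _ _ x2) (ex_intro _ _ y2).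
have [s1x s1y _] := U1; have [s2x s2y _] := U2; have [s3x s3y _] := U3.
case: (common_nbr_cases xy nxy s1x s1y) => [[a [b ?]]|[a1 [b1 [a10 b10 E1x E1y]]]].
  by exists s1, a, b.
case: (common_nbr_cases xy nxy s2x s2y) => [[a [b ?]]|[a2 [b2 [a20 b20 E2x E2y]]]].
  by exists s2, a, b.
case: (common_nbr_cases xy nxy s3x s3y) => [[a [b ?]]|[a3 [b3 [a30 b30 E3x E3y]]]].
  by exists s3, a, b.
exfalso; apply: s23.
rewrite (universal_common_powers_inv xy nxy a10 b10 E1x E1y a20 b20 E2x E2y U1 U2 (nesym s12)).
by rewrite (universal_common_powers_inv xy nxy a10 b10 E1x E1y a30 b30 E3x E3y U1 U3 (nesym s13)).
Qed.

Variable g : T.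
Hypothesis g_neq_e : g <> e.

Lemma phi_spec x : exists p : T * int * int, x = p.1.1 ^^ p.1.2 /\ g = p.1.1 ^^ p.2.
Proof. by have [s [a [b [Ex Eg]]]] := pair_cyclic x g; exists (s, a, b). Qed.

(* [phi x = a / b] whenever [x = s^a] and [g = s^b] (see [phi_rep]). *)
Definition phi x : rat :=
  let p := proj1_sig (constructive_indefinite_description _ (phi_spec x)) in
  p.1.2%:~R / p.2%:~R.

Lemma phi_rep x s (a b : int) : x = s ^^ a -> g = s ^^ b -> phi x = a%:~R / b%:~R.
Proof.
move=> Ex Eg; rewrite /phi.
case: (constructive_indefinite_description _ (phi_spec x)) => [[[t c] d] [Ex' Eg']] /=.
have [u [i [j [Es Et]]]] := pair_cyclic s t.
have ue : u <> e by move=> ue; apply: g_neq_e; rewrite Eg Es ue !gzpowe.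
have Eia : i * a = j * c by apply: (gzpow_inj ue); rewrite !gzpowM -Es -Et -Ex.
have Eib : i * b = j * d by apply: (gzpow_inj ue); rewrite !gzpowM -Es -Et -Eg.
have b0 : b != 0 by apply/eqP => b0; apply: g_neq_e; rewrite Eg b0.
have d0 : d != 0 by apply/eqP => d0; apply: g_neq_e; rewrite Eg' d0.
have i0 : i != 0 by apply/eqP => i0; apply: g_neq_e; rewrite Eg Es -gzpowM i0 mul0r.
have j0 : j != 0 by apply/eqP => j0; apply: g_neq_e; rewrite Eg' Et -gzpowM j0 mul0r.
apply/eqP; rewrite eqr_div ?intr_eq0 // -!intrM; apply/eqP; congr (_%:~R).
apply: (mulfI (mulf_neq0 i0 j0)).
have -> : i * j * (c * b) = j * c * (i * b) by ring.
by rewrite -Eia Eib; ring.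
Qed.

Lemma phi_gzpow x (n : int) : phi (x ^^ n) = phi x *~ n.
Proof.
have [u [a [b [Ex Eg]]]] := pair_cyclic x g.
rewrite (phi_rep Ex Eg) (@phi_rep _ u (a * n) b) //; last by rewrite gzpowM -Ex.
by rewrite intrM -[(_ / _) *~ n]mulrzr mulrAC.
Qed.

Lemma phi_morph x y : phi (x ** y) = phi x + phi y.
Proof.
have [s [a [b [Ex Ey]]]] := pair_cyclic x y.
have [u [i [j [Es Eg]]]] := pair_cyclic s g.
have Ex' : x = u ^^ (i * a) by rewrite gzpowM -Es.
have Ey' : y = u ^^ (i * b) by rewrite gzpowM -Es.
rewrite (phi_rep Ex' Eg) (phi_rep Ey' Eg) (@phi_rep _ u (i * a + i * b) j).
- by rewrite intrD mulrDl.
- by rewrite gzpowD -Ex' -Ey'.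
- exact: Eg.
Qed.

Lemma phi_inj x y : phi x = phi y -> x = y.
Proof.
have [s [a [b [Ex Ey]]]] := pair_cyclic x y.
have [u [i [j [Es Eg]]]] := pair_cyclic s g.
have Ex' : x = u ^^ (i * a) by rewrite gzpowM -Es.
have Ey' : y = u ^^ (i * b) by rewrite gzpowM -Es.
have j0 : j%:~R != 0 :> rat by rewrite intr_eq0; apply/eqP => j0; apply: g_neq_e; rewrite Eg j0.
rewrite (phi_rep Ex' Eg) (phi_rep Ey' Eg) => /(divIf j0)/intr_inj E.
by rewrite Ex' Ey' E.
Qed.

Lemma phi_adj x y : adj x y <-> zpm_adjQ (phi x) (phi y).
Proof.
split=> -[xy [n [n0 E]]]; split.
- by move/phi_inj.
- by exists n; split=> //; case: E => ->; [left | right]; rewrite phi_gzpow.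
- by move=> E'; apply: xy; rewrite E'.
- by exists n; split=> //; case: E => E; [left | right]; apply: phi_inj; rewrite phi_gzpow.
Qed.

Lemma phi_universal a b s :
  universal_common_nbr zpm_adjQ (phi a) (phi b) (phi s) -> universal_common_nbr adj a b s.
Proof.
case=> sa sb sU; split; try exact/phi_adj.
by move=> w wa wb ws; apply/phi_adj/sU; [apply/phi_adj | apply/phi_adj | move/phi_inj].
Qed.

Lemma phi_eq0 x : phi x = 0 -> x = e.
Proof. by rewrite -(mulr0z (phi g)) -phi_gzpow => /phi_inj. Qed.

Hypothesis reflection : reflection_prop adj.

Section RootStep.
Variables (Y : T) (n : nat).
Hypotheses (Y_neq_e : Y <> e) (n_ge2 : (2 <= n)%N).

Let n2 : 2 <= `|n%:Z| := n_ge2.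

Lemma reflection_at_gzpow : reflection_at adj Y (Y ^^ n%:Z).
Proof.
apply: (reflection (w := Y ^^ (n%:Z * 2 + 1))).
- by apply/(adj_gzpow1 _ Y_neq_e)/zpm_adjZ1.
- by apply/adj_sym/(adj_gzpow1 _ Y_neq_e)/zpm_adjZ1; lia.
- by rewrite adj_gzpow //; apply: nadjZ_mulD1.
- by move/(gzpow_inj Y_neq_e); apply: mulzD1_neq.
Qed.

(* The reflection [d] of [Y^n] through [Y] is not a power [Y^c]: [Y^(n c + 1)]
   would be a neighbour of [Y] outside the neighbourhood of [Y^n] that [d]
   does not dominate. *)
Lemma reflection_not_power D (c : int) : 2 <= `|c| -> D = Y ^^ c ->
  ~ (forall w, adj w Y -> ~ adj w (Y ^^ n%:Z) -> w <> Y ^^ n%:Z -> adj w D \/ w = D).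
Proof.
move=> c2 ED Ddom; have nc := ltz_abs_mulD1 n2 c2.
case: (Ddom (Y ^^ (n%:Z * c + 1))).
- by apply/adj_sym/(adj_gzpow1 _ Y_neq_e)/zpm_adjZ1; lia.
- by rewrite adj_gzpow //; apply: nadjZ_mulD1.
- by move/(gzpow_inj Y_neq_e); apply: mulzD1_neq.
- by rewrite ED adj_gzpow // mulrC; apply: nadjZ_mulD1.
- by rewrite ED => /(gzpow_inj Y_neq_e); rewrite mulrC; apply: mulzD1_neq.
Qed.

(* If [Y = D^c] with [c] coprime to [n], then [D] and [Y^n] are the gcd and
   the lcm of the non-adjacent pair [D^n], [Y]. *)
Lemma reflection_power_gcd D (c : int) : 2 <= `|c| -> Y = D ^^ c ->
  ~ (exists t, [/\ ~ adj t Y, t <> Y, universal_common_nbr adj t Y D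
                 & universal_common_nbr adj t Y (Y ^^ n%:Z)]) ->
  gcdn `|c| n <> 1%N.
Proof.
move=> c2 EY noT gcd1.
have De : D <> e by move=> De; apply: Y_neq_e; rewrite EY De gzpowe.
have [d0 n0 c0] : [/\ phi D <> 0, n%:Z <> 0 & c <> 0].
  by split; [move/phi_eq0 | lia | lia].
have [u [v bezout]] := Bezoutz c n%:Z.
have {}bezout : v * n%:Z + u * c = 1 by rewrite addrC bezout /gcdz /= gcd1.
have nc : ~ zpm_adjZ n%:Z c.
  case=> _ [t [_ [E|E]]]; rewrite E in bezout.
  - by apply: (mulz_neq1 (b := v + u * t) n2); rewrite -bezout; ring.
  - by apply: (mulz_neq1 (b := v * t + u) c2); rewrite -bezout; ring.
have nc_neq : phi D *~ n%:Z <> phi D *~ c.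
  move/(mulrz_inj d0) => E; rewrite E in bezout.
  by apply: (mulz_neq1 (b := v + u) c2); rewrite -bezout; ring.
have nc_nadj : ~ zpm_adjQ (phi D *~ n%:Z) (phi D *~ c) by rewrite adjQ_mulz.
apply: noT; exists (D ^^ n%:Z); split.
- by rewrite EY adj_gzpow.
- by rewrite EY => /(gzpow_inj De) E; apply: nc_neq; rewrite E.
- apply: phi_universal; rewrite EY !phi_gzpow.
  exact: (universal_gcdQ d0 n0 c0 bezout nc_neq nc_nadj).
- apply: phi_universal; rewrite EY !phi_gzpow -mulrzA (mulrC c).
  exact: (universal_lcmQ d0 n0 c0 bezout nc_neq nc_nadj).
Qed.

Lemma root_step : exists Y1 (k : nat), [/\ (2 <= k)%N, (k %| n)%N & Y1 ^^ k%:Z = Y].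
Proof.
have [D [DY _ Ddom [w [wY wD w_neq]] noT]] := reflection_at_gzpow.
have DinvY : D <> inv Y.
  by move=> DV; apply: wD; rewrite DV; apply: adj_inv; rewrite -?DV.
case: (DY) => DnY [c [c0 [EY|ED]]].
- have c2 : 2 <= `|c|.
    suff : c <> 1 /\ c <> -1 by lia.
    by split=> E; [apply: DnY | apply: DinvY]; rewrite EY E ?gzpow1 ?gzpowN1 ?ginvK.
  have k2 := reflection_power_gcd c2 EY noT.
  have k0 : (0 < gcdn `|c| n)%N by rewrite gcdn_gt0 (ltnW n_ge2) orbT.
  have kc : ((gcdn `|c| n)%:Z %| c)%Z by rewrite /dvdz absz_nat unfold_in dvdn_gcdl.
  exists (D ^^ (c %/ (gcdn `|c| n)%:Z)%Z), (gcdn `|c| n); split.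
  + by move: k0 k2; case: (gcdn _ _) => [|[|]].
  + exact: dvdn_gcdr.
  + by rewrite -gzpowM divzK.
- exfalso; apply: (reflection_not_power _ ED Ddom).
  suff : c <> 1 /\ c <> -1 by lia.
  by split=> E; [apply: DnY | apply: DinvY]; rewrite ED E ?gzpow1 ?gzpowN1.
Qed.

End RootStep.

Lemma gzpow_root (n : nat) Y : (0 < n)%N -> exists z, z ^^ n%:Z = Y.
Proof.
elim/ltn_ind: n Y => n IH Y n0.
case: (eqVneq n 1%N) => [->|n1]; first by exists Y; rewrite gzpow1.
case: (classic (Y = e)) => [->|Ye]; first by exists e; rewrite gzpowe.
have n2 : (2 <= n)%N by case: n n0 n1 {IH} => [|[|]].
have [Y1 [k [k2 kn <-]]] := root_step Ye n2.
have k0 : (0 < k)%N by apply: leq_trans k2.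
have nk0 : (0 < n %/ k)%N by rewrite divn_gt0 // dvdn_leq.
have [z <-] := IH _ (ltn_Pdiv k2 n0) Y1 nk0.
by exists z; rewrite -gzpowM -PoszM divnK.
Qed.

Lemma phi_surj q : exists z, phi z = q.
Proof.
have den0 : (0 < `|denq q|)%N by rewrite absz_gt0 denq_neq0.
have [z Ez] := gzpow_root (g ^^ numq q) den0.
exists z; move/(congr1 phi): Ez; rewrite !phi_gzpow gtz0_abs ?denq_gt0 //.
have -> : phi g = 1 by rewrite (@phi_rep g g 1 1) ?gzpow1 // divr1.
move=> E; rewrite -[RHS]divq_num_den -E -mulrzr mulfK //.
by rewrite intr_eq0 denq_neq0.
Qed.

Lemma phi_bij : bijective phi.
Proof.
have phi_inv q : {z | phi z = q}.
  exact: constructive_indefinite_description _ (phi_surj q).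
exists (fun q => sval (phi_inv q)) => [x | q]; last exact: (svalP (phi_inv q)).
by apply: phi_inj; rewrite (svalP (phi_inv (phi x))).
Qed.

End Group.

Theorem mainTheorem9 (T : Type) (mul : T -> T -> T) (e : T) (inv : T -> T)
  (HG : is_group mul e inv)
  (Hiso : exists f : T -> rat, bijective f /\
     forall x y : T, zpm_adj mul e inv x y <-> zpm_adjQ (f x) (f y)) :
  exists phi : T -> rat, bijective phi /\
     forall x y : T, phi (mul x y) = (phi x + phi y)%R.
Proof.
case: Hiso => f [f_bij f_adj]; have [f' fK f'K] := f_bij.
have f'_adj x y : zpm_adjQ x y -> zpm_adj mul e inv (f' x) (f' y).
  by move=> xy; apply/f_adj; rewrite !f'K.
have f'0_iso z : ~ zpm_adj mul e inv (f' 0%R) z by move/f_adj; rewrite f'K; apply: adjQ0.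
have e_iso z : ~ zpm_adj mul e inv e z.
  by have := f'0_iso z; rewrite (isolated_e HG f'0_iso).
have g_neq_e : f' 1%R <> e := adj_neq_e e_iso (f'_adj _ _ adjQ12).
have three_univ := three_universal_nbrs_iso f_bij f_adj three_universal_nbrsQ.
have refl := reflection_prop_iso f_bij f_adj reflection_propQ.
exists (phi HG e_iso three_univ (f' 1%R)); split.
- exact: phi_bij.
- exact: phi_morph.
Qed.
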